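(* Let $\alpha\ge1$, $\beta\ge0$ and $\varepsilon>0$ be reals, and let $\mathscr{C}$ be a graph class closed under taking the subgraph formed by any union of connected components. Suppose $\mathsf{A}$ is a deterministic LOCAL algorithm with round complexity $r$ which on every $G\in\mathscr{C}$ outputs a dominating set of size at most $\alpha\,\mathrm{MDS}(G)+\beta$. Then there is a deterministic LOCAL algorithm with round complexity $r+O(\beta/\varepsilon)$ which on every $G\in\mathscr{C}$ outputs a dominating set of size at most $(\alpha+\varepsilon)\,\mathrm{MDS}(G)$.
   Context: $\mathrm{MDS}(G)$ is the minimum size of a dominating set of $G$. Deterministic LOCAL model: distinct positive integer identifiers, synchronous rounds of unbounded message exchange with neighbours and unbounded local computation; round complexity $r$ means every vertex fixes its output after $r$ rounds; the output is the set of vertices outputting ''selected''. *)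

From Stdlib Require Import Reals.
From mathcomp Require Import all_boot.

Set Implicit Arguments.
Unset Strict Implicit.
Unset Printing Implicit Defensive.

Record graph := Graph {
  vert : finType;
  adj : rel vert;
  adj_sym : symmetric adj;
  adj_irr : irreflexive adj
}.

Definition dominating (G : graph) (D : {set vert G}) : bool :=
  [forall v, (v \in D) || [exists u in D, adj u v]].

Definition has_dom_set_of_size (G : graph) (k : nat) : bool :=
  [exists D : {set vert G}, dominating D && (#|D| == k)].

Lemma has_dom_set_ex (G : graph) : exists k, has_dom_set_of_size G k.
Proof.
exists #|[set: vert G]|; apply/existsP; exists [set: vert G].
rewrite eqxx andbT; apply/forallP => v; by rewrite in_setT.
Qed.

Definition MDS (G : graph) : nat := ex_minn (has_dom_set_ex G).

Definition induced (G : graph) (S : {set vert G}) : graph.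
Proof.
refine (@Graph ({x : vert G | x \in S} : finType)
          (fun x y => adj (val x) (val y)) _ _).
- by move=> x y; rewrite adj_sym.
- by move=> x; rewrite adj_irr.
Defined.

Definition union_of_components (G : graph) (S : {set vert G}) : Prop :=
  forall u v, adj u v -> u \in S -> v \in S.

Definition closed_under_components (C : graph -> Prop) : Prop :=
  forall (G : graph) (S : {set vert G}), C G -> union_of_components S ->
    C (induced S).

Definition valid_ids (G : graph) (id : vert G -> nat) : Prop :=
  injective id /\ forall v, 0 < id v.

Fixpoint ball (G : graph) (v : vert G) (k : nat) : {set vert G} :=
  match k with
  | 0 => [set v]
  | k'.+1 => ball v k' :|: [set w | [exists u in ball v k', adj u w]]
  end.

Definition inner_ball (G : graph) (v : vert G) (r : nat) : {set vert G} :=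
  if r is k.+1 then ball v k else set0.

(* Edges that v learns about in r rounds: those with at least one endpoint
   at distance < r from v. *)
Definition known_edge (G : graph) (v : vert G) (r : nat) (x y : vert G) : bool :=
  adj x y && ((x \in inner_ball v r) || (y \in inner_ball v r)).

Definition same_view (G : graph) (id : vert G -> nat) (v : vert G)
    (G' : graph) (id' : vert G' -> nat) (v' : vert G') (r : nat) : Prop :=
  exists f : vert G -> vert G',
    [/\ f v = v',
        forall x, x \in ball v r -> f x \in ball v' r /\ id' (f x) = id x,
        forall y, y \in ball v' r -> exists2 x, x \in ball v r & f x = y
      & forall x y, x \in ball v r -> y \in ball v r ->
          known_edge v r x y = known_edge v' r (f x) (f y)].

Definition algorithm := forall G : graph, (vert G -> nat) -> vert G -> bool.

(* Round complexity r: the output of each vertex is a function of its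
   r-round view (the information a full-information r-round protocol gathers). *)
Definition local_rounds (A : algorithm) (r : nat) : Prop :=
  forall (G : graph) (id : vert G -> nat) (v : vert G)
         (G' : graph) (id' : vert G' -> nat) (v' : vert G'),
    valid_ids id -> valid_ids id' -> same_view id v id' v' r ->
    A G id v = A G' id' v'.

Definition output (A : algorithm) (G : graph) (id : vert G -> nat) : {set vert G} :=
  [set v | A G id v].
Arguments output A G id : clear implicits.

From Stdlib Require Import Reals Lra ZArith.
From mathcomp Require Import all_boot zify.
Set Implicit Arguments. Unset Strict Implicit. Unset Printing Implicit Defensive.

(* Take M = ceil (beta / eps).  A component whose domination number is at most M
   has radius at most 3M around each of its vertices, since a vertex at distance d
   from v is dominated from distance at least d-1, so every three layers of the
   component cost one more dominator.  Call such vertices small: within 3M+2 rounds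
   they see their whole component and output a canonical minimum dominating set of
   it (the one whose identifier set has the least code).  All other vertices run A
   on the union of the remaining components; each of them has domination number
   above M >= beta / eps, so there the additive error beta is at most eps times the
   optimum.  If beta <= eps, A itself works. *)

Definition dominates (G : graph) (K D : {set vert G}) : bool :=
  [forall x in K, (x \in D) || [exists u in D, adj u x]].

Lemma dominatesP (G : graph) (K D : {set vert G}) :
  reflect (forall x, x \in K -> (x \in D) || [exists u in D, adj u x])
          (dominates K D).
Proof. exact: forall_inP. Qed.

Lemma dominatingE (G : graph) (D : {set vert G}) : dominating D = dominates [set: vert G] D.
Proof. by apply/forallP/dominatesP => h x //; apply: h. Qed.

Lemma dominates_setI (G : graph) (K K' D : {set vert G}) :
  K \subset K' -> dominates K' D -> (forall d x, x \in K -> adj d x -> d \in K) ->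
  dominates K (D :&: K).
Proof.
move=> hKK' /dominatesP hD hcl; apply/dominatesP => x hx.
case/orP: (hD x (subsetP hKK' _ hx)) => [hxD | /exists_inP [d hd ha]].
  by rewrite in_setI hxD hx.
by apply/orP; right; apply/exists_inP; exists d; rewrite // in_setI hd (hcl d x).
Qed.

Lemma card_blocks_le (T : finType) (blk : T -> {set T}) (X Y U : {set T}) :
  (forall u, u \in U -> u \in blk u /\ blk u \subset U) ->
  (forall u w, u \in U -> w \in blk u -> blk w = blk u) ->
  (forall u, u \in U -> #|X :&: blk u| <= #|Y :&: blk u|) ->
  #|X :&: U| <= #|Y :&: U|.
Proof.
have [n] := ubnP #|U|; elim: n U => // n IH U hn hblk heq hle.
case: (set_0Vmem U) => [-> | [u hu]]; first by rewrite !setI0.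
have [hu_blk hsub] := hblk u hu.
set U' := U :\: blk u.
have hU'U : U' \subset U := subsetDl _ _.
have hU' : #|U'| < n.
  rewrite -ltnS; apply: leq_trans hn; rewrite ltnS; apply: proper_card; apply/properP; split=> //.
  by exists u; rewrite // in_setD hu_blk.
have hblk' w : w \in U' -> w \in blk w /\ blk w \subset U'.
  rewrite in_setD => /andP [hwu hw]; have [hw_blk hwsub] := hblk w hw; split=> //.
  apply/subsetP => z hz; rewrite in_setD (subsetP hwsub _ hz) andbT.
  apply: contra hwu => hzu.
  by rewrite -(heq u z hu hzu) (heq w z hw hz).
have := IH U' hU' hblk' (fun w z hw => heq w z (subsetP hU'U _ hw))
  (fun w hw => hle w (subsetP hU'U _ hw)).
rewrite -(cardsID (blk u) (X :&: U)) -(cardsID (blk u) (Y :&: U)).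
rewrite -!setIA (setIidPr hsub) -!setIDA.
by apply: leq_add; apply: hle.
Qed.

Section Balls.
Variable G : graph.
Implicit Types (K D S : {set vert G}) (u v w x y : vert G).

Lemma ball_center v k : v \in ball v k.
Proof. by elim: k => [|k IH] /=; rewrite ?in_set1 // in_setU IH. Qed.

Lemma ballS v k x :
  (x \in ball v k.+1) = (x \in ball v k) || [exists u in ball v k, adj u x].
Proof. by rewrite /= in_setU in_set. Qed.

Lemma ball_subS v k : ball v k \subset ball v k.+1.
Proof. by apply/subsetP => x; rewrite ballS => ->. Qed.

Lemma ball_sub v k k' : k <= k' -> ball v k \subset ball v k'.
Proof.
move=> /subnK <-; elim: (k' - k) => [|n IH] //=.
exact: subset_trans IH (ball_subS _ _).
Qed.

Lemma ball_adj v k u x : u \in ball v k -> adj u x -> x \in ball v k.+1.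
Proof. by move=> hu ha; rewrite ballS; apply/orP; right; apply/exists_inP; exists u. Qed.

Lemma ball1_adj u x : adj u x -> x \in ball u 1.
Proof. exact: ball_adj (ball_center u 0). Qed.

Lemma ball_trans u w a x b : w \in ball u a -> x \in ball w b -> x \in ball u (a + b).
Proof.
move=> hw; elim: b x => [|b IH] x; first by rewrite /= in_set1 addn0 => /eqP ->.
rewrite ballS addnS => /orP [/IH /(subsetP (ball_subS _ _)) //|].
by case/exists_inP=> y /IH hy; apply: ball_adj.
Qed.

Lemma ball_sym u v k : u \in ball v k -> v \in ball u k.
Proof.
elim: k u => [|k IH] u; first by rewrite /= !in_set1 eq_sym.
rewrite ballS => /orP [/IH /(subsetP (ball_subS _ _)) //|].
case/exists_inP=> y /IH hy ha; rewrite -add1n.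
by apply: ball_trans hy; apply: ball1_adj; rewrite adj_sym.
Qed.

Lemma ball_boundary u j k x : x \in ball u j -> x \notin ball u k ->
  exists y, (y \in ball u k.+1) && (y \notin ball u k).
Proof.
elim: j x => [|j IH] x; first by rewrite /= in_set1 => /eqP ->; rewrite ball_center.
rewrite ballS => /orP [/IH //|/exists_inP [w hw ha] hx].
case hwk: (w \in ball u k); last exact: IH hw (negbT hwk).
by exists x; rewrite hx (ball_adj hwk ha).
Qed.

Lemma ball_stable v L :
  ball v L.+1 \subset ball v L -> forall k, ball v k \subset ball v L.
Proof.
move=> hc; elim=> [|k IH].
  by apply/subsetP => x; rewrite /= in_set1 => /eqP ->; apply: ball_center.
apply/subsetP => x; rewrite ballS => /orP [/(subsetP IH) //|/exists_inP [u hu ha]].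
by apply: (subsetP hc); apply: ball_adj (subsetP IH _ hu) ha.
Qed.

Lemma ball_closed_adj v L d x :
  ball v L.+1 \subset ball v L -> x \in ball v L -> adj d x -> d \in ball v L.
Proof. by move=> hc hx ha; apply: (subsetP hc); apply: ball_adj hx _; rewrite adj_sym. Qed.

Lemma component_ball_sub S v :
  union_of_components S -> v \in S -> forall k, ball v k \subset S.
Proof.
move=> hS hv; elim=> [|k IH]; first by apply/subsetP => x; rewrite in_set1 => /eqP ->.
apply/subsetP => x; rewrite ballS => /orP [/(subsetP IH) //|/exists_inP [u hu ha]].
exact: hS ha (subsetP IH _ hu).
Qed.

(* A vertex at distance [3n+4] from [u] is dominated from outside [ball u (3n).+2]:
   every three further layers of the component cost one more dominator. *)
Lemma dominates_ball_card K D u n j x :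
  (forall k, ball u k \subset K) -> dominates K D ->
  x \in ball u j -> x \notin ball u (3 * n) -> n < #|D :&: ball u (3 * n).+2|.
Proof.
move=> hK /dominatesP hD; elim: n j x => [|n IH] j x hx hn.
  rewrite card_gt0; apply/set0Pn.
  case/orP: (hD u (subsetP (hK 0) _ (ball_center u 0))) => [hu|/exists_inP [d hd ha]].
    by exists u; rewrite in_setI hu ball_center.
  exists d; rewrite in_setI hd (subsetP (ball_sub u (isT : 1 <= 2))) //.
  by apply: ball1_adj; rewrite adj_sym.
rewrite (_ : 3 * n.+1 = (3 * n).+3) in hn *; last by lia.
have [y /andP [hy1 hy2]] := ball_boundary hx hn.
have hyn : y \notin ball u (3 * n).
  by apply: contra hy2; apply/subsetP/ball_sub; lia.
have IHy := IH _ _ hy1 hyn.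
have new_dominator d : d \in D -> (d == y) || adj d y ->
    n.+1 < #|D :&: ball u (3 * n).+4.+1|.
  move=> hd hdy.
  have hd1 : d \in ball u (3 * n).+4.+1.
    case/orP: hdy => [/eqP ->|ha]; first exact: (subsetP (ball_subS _ _) _ hy1).
    by apply: ball_adj hy1 _; rewrite adj_sym.
  have hd2 : d \notin ball u (3 * n).+2.
    apply/negP => hd2; move: hy2; case/orP: hdy => [/eqP <-|ha].
      by rewrite (subsetP (ball_subS _ _) _ hd2).
    by rewrite (ball_adj hd2 ha).
  have hsub : d |: (D :&: ball u (3 * n).+2) \subset D :&: ball u (3 * n).+4.+1.
    apply/subsetP => z; rewrite !in_setU1 !in_setI => /orP [/eqP ->|/andP [-> hz]].
      by rewrite hd hd1.
    have le25 : (3 * n).+2 <= (3 * n).+4.+1 by lia.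
    by rewrite (subsetP (ball_sub u le25) _ hz).
  apply: leq_trans (subset_leq_card hsub).
  by rewrite cardsU1 in_setI (negbTE hd2) andbF add1n.
case/orP: (hD y (subsetP (hK _) _ hy1)) => [hy|/exists_inP [d hd ha]].
  by apply: (new_dominator y hy); rewrite eqxx.
by apply: (new_dominator d hd); rewrite ha orbT.
Qed.

End Balls.

Definition has_dom_subset_of_size (G : graph) (K : {set vert G}) (s : nat) : bool :=
  [exists D : {set vert G}, [&& D \subset K, dominates K D & #|D| == s]].

Lemma has_dom_subset_ex (G : graph) (K : {set vert G}) :
  exists s, has_dom_subset_of_size K s.
Proof.
exists #|K|; apply/existsP; exists K; rewrite subxx eqxx andbT.
by apply/dominatesP => x ->.
Qed.

Definition mds_in (G : graph) (K : {set vert G}) : nat := ex_minn (has_dom_subset_ex K).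

Section LocalDomination.
Variable G : graph.
Implicit Types (K D : {set vert G}) (id : vert G -> nat).

Lemma mds_inP K : exists2 D : {set vert G}, D \subset K & dominates K D /\ #|D| = mds_in K.
Proof.
rewrite /mds_in; case: ex_minnP => s /existsP [D /and3P [hDK hD /eqP <-]] _.
by exists D.
Qed.

Lemma mds_in_min K D : D \subset K -> dominates K D -> mds_in K <= #|D|.
Proof.
move=> hDK hD; rewrite /mds_in; case: ex_minnP => s _; apply.
by apply/existsP; exists D; rewrite hDK hD eqxx.
Qed.

(* Vertex sets are encoded by the code of their list of identifiers. *)
Definition code_set id K (m : nat) : {set vert G} :=
  [set x in K | id x \in CodeSeq.decode m].

Definition code_of id D : nat := CodeSeq.code [seq id x | x <- enum D].

Lemma code_setK id K D : injective id -> D \subset K -> code_set id K (code_of id D) = D.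
Proof.
move=> hinj hDK; apply/setP => x.
rewrite in_set CodeSeq.codeK mem_map // mem_enum andb_idl //.
exact: (subsetP hDK).
Qed.

Lemma code_set_sub id K m : code_set id K m \subset K.
Proof. by apply/subsetP => x; rewrite in_set => /andP []. Qed.

Definition optimal_code id K (m : nat) : bool :=
  dominates K (code_set id K m) && (#|code_set id K m| == mds_in K).

Definition default_code id K : nat :=
  code_of id (odflt set0 [pick D : {set vert G} | [&& D \subset K, dominates K D & #|D| == mds_in K]]).

Lemma default_code_optimal id K : injective id -> optimal_code id K (default_code id K).
Proof.
move=> hinj; rewrite /default_code; case: pickP => [D /and3P [hDK hD hc]|none].
  by rewrite /optimal_code code_setK // hD hc.
have [D hDK [hD hc]] := mds_inP K.
by move: (none D); rewrite hDK hD hc eqxx.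
Qed.

Lemma canon_code_ex id K : exists m, optimal_code id K m || (m == default_code id K).
Proof. by exists (default_code id K); rewrite eqxx orbT. Qed.

(* The least code of a minimum dominating set of [K]; the fallback disjunct only
   provides the existence proof [ex_minn] needs without assuming [id] injective. *)
Definition canon_code id K : nat := ex_minn (canon_code_ex id K).

Lemma canon_code_optimal id K : injective id -> optimal_code id K (canon_code id K).
Proof.
move=> hinj; rewrite /canon_code; case: ex_minnP => m /orP [// | /eqP ->] _.
exact: default_code_optimal.
Qed.

End LocalDomination.

Section Isomorphism.
Variables (G G' : graph) (id : vert G -> nat) (id' : vert G' -> nat).
Variables (K : {set vert G}) (K' : {set vert G'}) (f : vert G -> vert G').
Hypothesis f_inj : {in K &, injective f}.
Hypothesis f_onto : f @: K = K'.
Hypothesis f_id : {in K, forall x, id' (f x) = id x}.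
Hypothesis f_adj : {in K &, forall x y, adj x y = adj (f x) (f y)}.

Lemma iso_card (D : {set vert G}) : D \subset K -> #|f @: D| = #|D|.
Proof. by move=> hD; apply: card_in_imset => x y /(subsetP hD) hx /(subsetP hD); apply: f_inj. Qed.

Lemma iso_mem (D : {set vert G}) x : D \subset K -> x \in K -> (f x \in f @: D) = (x \in D).
Proof.
move=> hD hx; apply/imsetP/idP => [[y hy e]|]; last by exists x.
by rewrite (f_inj hx (subsetP hD _ hy) e).
Qed.

Lemma iso_dominates (D : {set vert G}) : D \subset K -> dominates K' (f @: D) = dominates K D.
Proof.
move=> hD; apply/dominatesP/dominatesP => h x.
  move=> hx; have hfx : f x \in K' by rewrite -f_onto imset_f.
  have := h _ hfx; rewrite iso_mem //.
  case/orP=> [-> // | /exists_inP [_ /imsetP [u hu ->] ha]].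
  by apply/orP; right; apply/exists_inP; exists u; rewrite // f_adj // (subsetP hD).
rewrite -f_onto => /imsetP [y hy ->].
have := h y hy; rewrite iso_mem //.
case/orP=> [-> // | /exists_inP [u hu ha]].
by apply/orP; right; apply/exists_inP; exists (f u); rewrite ?imset_f // -f_adj // (subsetP hD).
Qed.

Lemma iso_has_dom_subset_of_size s :
  has_dom_subset_of_size K s = has_dom_subset_of_size K' s.
Proof.
apply/existsP/existsP => [[D /and3P [hDK hD hc]] | [D' /and3P [hDK' hD' hc']]].
  by exists (f @: D); rewrite iso_dominates // iso_card // hD hc -f_onto imsetS.
pose D := K :&: f @^-1: D'.
have hDK : D \subset K by apply: subsetIl.
have hfD : f @: D = D'.
  apply/setP => y; apply/imsetP/idP => [[x] | hy].
    by rewrite in_setI inE => /andP [_ h] ->.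
  move: (subsetP hDK' _ hy); rewrite -f_onto => /imsetP [x hx e]; exists x => //.
  by rewrite in_setI hx inE -e.
by exists D; rewrite hDK -iso_dominates // hfD hD' -iso_card // hfD.
Qed.

Lemma iso_mds_in : mds_in K = mds_in K'.
Proof. exact: eq_ex_minn iso_has_dom_subset_of_size. Qed.

Lemma iso_code_set m : code_set id' K' m = f @: code_set id K m.
Proof.
apply/setP => y; rewrite in_set; apply/idP/imsetP.
  rewrite -f_onto => /andP [/imsetP [x hx ->] h]; exists x => //.
  by rewrite in_set hx -f_id.
by case=> x; rewrite in_set => /andP [hx h] ->; rewrite -f_onto imset_f // f_id.
Qed.

Lemma iso_optimal_code m : optimal_code id' K' m = optimal_code id K m.
Proof.
by rewrite /optimal_code iso_code_set iso_dominates ?iso_card ?iso_mds_in ?code_set_sub.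
Qed.

Lemma iso_canon_code : injective id -> injective id' -> canon_code id K = canon_code id' K'.
Proof.
move=> hinj hinj'; apply: eq_ex_minn => m; rewrite iso_optimal_code.
case hm: (optimal_code id K m) => //=; apply/eqP/eqP => e.
  by move: hm; rewrite e default_code_optimal.
by move: hm; rewrite -iso_optimal_code e default_code_optimal.
Qed.

End Isomorphism.

Lemma ball_sub_inner (G : graph) (v : vert G) k r : k < r -> ball v k \subset inner_ball v r.
Proof. by case: r => // r hk; apply: ball_sub. Qed.

Definition small (M : nat) (G : graph) (v : vert G) : bool :=
  (ball v (3 * M).+1 \subset ball v (3 * M)) && (mds_in (ball v (3 * M)) <= M).

Section View.
Variables (G G' : graph) (id : vert G -> nat) (id' : vert G' -> nat).
Variables (v : vert G) (v' : vert G') (R : nat) (f : vert G -> vert G').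
Hypothesis id_inj : injective id.
Hypothesis f_root : f v = v'.
Hypothesis f_ball : forall x, x \in ball v R -> f x \in ball v' R /\ id' (f x) = id x.
Hypothesis f_onto : forall y, y \in ball v' R -> exists2 x, x \in ball v R & f x = y.
Hypothesis f_known : forall x y, x \in ball v R -> y \in ball v R ->
  known_edge v R x y = known_edge v' R (f x) (f y).

Lemma view_inj : {in ball v R &, injective f}.
Proof. by move=> x y hx hy e; apply: id_inj; rewrite -(f_ball hx).2 -(f_ball hy).2 e. Qed.

Lemma view_ball k x : k <= R -> x \in ball v R -> (x \in ball v k) = (f x \in ball v' k).
Proof.
elim: k x => [|k IH] x hk hx.
  rewrite /= !in_set1 -f_root; apply/eqP/eqP => [-> //|].
  by apply: view_inj => //; apply: ball_center.
have hkR : k <= R by apply: ltnW.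
have hk_inner := subsetP (ball_sub_inner v hk).
have hk_inner' := subsetP (ball_sub_inner v' hk).
rewrite !ballS IH //; congr (_ || _); apply/exists_inP/exists_inP.
  case=> u hu ha; have huR : u \in ball v R by apply: (subsetP (ball_sub _ hkR)).
  have hfu : f u \in ball v' k by rewrite -IH.
  have : known_edge v R u x by rewrite /known_edge ha hk_inner.
  by rewrite f_known // => /andP [ha' _]; exists (f u).
case=> w hw ha; have [u huR hfu] := f_onto (subsetP (ball_sub _ hkR) _ hw).
have hu : u \in ball v k by rewrite IH // hfu.
have : known_edge v' R (f u) (f x) by rewrite /known_edge hfu ha hk_inner'.
by rewrite -f_known // => /andP [ha' _]; exists u.
Qed.

Lemma view_imset_ball k : k <= R -> f @: ball v k = ball v' k.
Proof.
move=> hk; apply/setP => y; apply/imsetP/idP.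
  by case=> x hx ->; rewrite -view_ball // (subsetP (ball_sub _ hk)).
move=> hy; have [x hxR hfx] := f_onto (subsetP (ball_sub _ hk) _ hy).
by exists x; rewrite // view_ball // hfx.
Qed.

Lemma view_adj k : k < R -> {in ball v k &, forall x y, adj x y = adj (f x) (f y)}.
Proof.
move=> hk x y hx hy; have hkR := ltnW hk.
have hfx : f x \in ball v' k by rewrite -view_ball // (subsetP (ball_sub _ hkR)).
have := f_known (subsetP (ball_sub _ hkR) _ hx) (subsetP (ball_sub _ hkR) _ hy).
by rewrite /known_edge (subsetP (ball_sub_inner _ hk) _ hx)
  (subsetP (ball_sub_inner _ hk) _ hfx) !andbT.
Qed.

Lemma same_view_le r : r <= R -> same_view id v id' v' r.
Proof.
move=> hr; have sub := subsetP (ball_sub v hr).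
exists f; split => //.
- by move=> x hx; rewrite -view_ball ?(f_ball (sub _ hx)).2 ?(sub _ hx).
- move=> y hy; have [x hxR hfx] := f_onto (subsetP (ball_sub _ hr) _ hy).
  by exists x; rewrite // view_ball // hfx.
move=> x y hx hy; case: r hr hx hy sub => [|k] hr hx hy sub.
  by rewrite /known_edge /= !in_set0 !andbF.
have hkR := ltnW hr.
have inner := subsetP (ball_sub_inner v hr); have inner' := subsetP (ball_sub_inner v' hr).
rewrite /known_edge /= -(view_ball hkR (sub _ hx)) -(view_ball hkR (sub _ hy)).
case hxy: ((x \in ball v k) || (y \in ball v k)); rewrite ?andbF ?andbT //.
have := f_known (sub _ hx) (sub _ hy); rewrite /known_edge.
case/orP: hxy => h.
  have hfx : f x \in ball v' k by rewrite -view_ball ?(sub _ hx).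
  by rewrite (inner _ h) (inner' _ hfx) !andbT.
have hfy : f y \in ball v' k by rewrite -view_ball ?(sub _ hy).
by rewrite (inner _ h) (inner' _ hfy) !orbT !andbT.
Qed.

Lemma view_inj_ball k : k <= R -> {in ball v k &, injective f}.
Proof. by move=> hk x y /(subsetP (ball_sub v hk)) hx /(subsetP (ball_sub v hk)); apply: view_inj. Qed.

Lemma view_id_ball k : k <= R -> {in ball v k, forall x, id' (f x) = id x}.
Proof. by move=> hk x /(subsetP (ball_sub v hk)) /f_ball []. Qed.

Lemma view_closed k : k < R -> (ball v k.+1 \subset ball v k) = (ball v' k.+1 \subset ball v' k).
Proof.
move=> hk; rewrite -(view_imset_ball hk) -(view_imset_ball (ltnW hk)).
apply/idP/idP => [/(imsetS f) // | /subsetP hsub].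
apply/subsetP => x hx; have hxR := subsetP (ball_sub v hk) _ hx.
by rewrite view_ball ?(ltnW hk) // -(view_imset_ball (ltnW hk)) hsub ?imset_f.
Qed.

Lemma view_small M : 3 * M < R -> small M v = small M v'.
Proof.
move=> hM; rewrite /small view_closed //.
by rewrite (iso_mds_in (view_inj_ball (ltnW hM)) (view_imset_ball (ltnW hM)) (view_adj hM)).
Qed.

Lemma view_canon_code M : 3 * M < R -> injective id' ->
  canon_code id (ball v (3 * M)) = canon_code id' (ball v' (3 * M)).
Proof.
move=> hM; have hM' := ltnW hM.
exact: (iso_canon_code (view_inj_ball hM') (view_imset_ball hM') (view_id_ball hM') (view_adj hM)).
Qed.

End View.

Definition boost (A : algorithm) (M : nat) : algorithm :=
  fun G id v => if small M v then id v \in CodeSeq.decode (canon_code id (ball v (3 * M)))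
                else A G id v.

Lemma boost_local A r M : local_rounds A r -> local_rounds (boost A M) (r + 3 * M + 2).
Proof.
move=> hA G id v G' id' v' hid hid' [f [f_root f_ball f_onto f_known]].
have hinj := hid.1; have hM : 3 * M < r + 3 * M + 2 by lia.
rewrite /boost (view_small hinj f_root f_ball f_onto f_known hM).
case: (small M v').
  rewrite -(view_canon_code hinj f_root f_ball f_onto f_known hM hid'.1) -f_root.
  by rewrite (view_id_ball f_ball (ltnW hM)) ?ball_center.
apply: hA => //; apply: (same_view_le hinj f_root f_ball f_onto f_known); lia.
Qed.

Section Components.
Variables (G : graph) (M : nat).
Local Notation L := (3 * M).
Implicit Types (D : {set vert G}) (u v w x : vert G).

Lemma small_ball u v : small M v -> u \in ball v L -> ball u L = ball v L /\ small M u.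
Proof.
move=> /andP [hc hs] hu; have hcl := ball_stable hc.
have hK k : ball u k \subset ball v L.
  by apply/subsetP => y hy; apply: (subsetP (hcl (L + k))); apply: ball_trans hu hy.
have [D hDK [hD hcard]] := mds_inP (ball v L).
have e : ball u L = ball v L.
  apply/eqP; rewrite eqEsubset hK /=; apply/subsetP => x hx.
  apply/negPn/negP => hnx.
  have := dominates_ball_card hK hD (ball_trans (ball_sym hu) hx) hnx.
  move/leq_trans/(_ (subset_leq_card (subsetIl D _))).
  by rewrite hcard ltnNge hs.
by split=> //; rewrite /small e hs andbT; apply: hK.
Qed.

Definition small_part : {set vert G} := [set v | small M v].
Definition large_part : {set vert G} := ~: small_part.

Lemma large_part_closed : union_of_components large_part.
Proof.
move=> u v ha; rewrite !in_setC !in_set; apply: contra => hv.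
have hu : u \in ball v L.
  case/andP: hv => hc _; apply: (subsetP hc).
  by apply: (subsetP (ball_sub v (_ : 1 <= L.+1))); rewrite // ball1_adj // adj_sym.
exact: (small_ball hv hu).2.
Qed.

(* A component of the large part either is not contained in the [3M]-ball of its
   vertex [v], and then is expensive to dominate by [dominates_ball_card], or it is,
   and then [v] is not small only because its domination number exceeds [M]. *)
Lemma large_part_dominates_gt D v : dominates large_part D -> v \in large_part -> M < #|D|.
Proof.
move=> hD hv; have hK := component_ball_sub large_part_closed hv.
have hcard k : #|D :&: ball v k| <= #|D| := subset_leq_card (subsetIl D _).
case hc: (ball v L.+1 \subset ball v L).
  have hs : M < mds_in (ball v L) by move: hv; rewrite in_setC in_set /small hc -ltnNge.
  apply: leq_trans hs (leq_trans _ (hcard L)); apply: mds_in_min; first exact: subsetIr.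
  apply: dominates_setI (hK L) hD _ => d x; exact: ball_closed_adj.
have [x hx1 hx2] : exists2 x, x \in ball v L.+1 & x \notin ball v L.
  by apply/exists_inP; rewrite -negb_forall_in; apply/negP => /forall_inP/subsetP; rewrite hc.
exact: leq_trans (dominates_ball_card hK hD hx1 hx2) (hcard _).
Qed.

End Components.

Section BoostSmall.
Variables (G : graph) (id : vert G -> nat) (A : algorithm) (M : nat).
Hypothesis id_inj : injective id.
Local Notation L := (3 * M).
Local Notation out := (output (boost A M) G id).

Lemma boost_ball u : small M u ->
  out :&: ball u L = code_set id (ball u L) (canon_code id (ball u L)).
Proof.
move=> hu; apply/setP => w; rewrite in_setI !in_set /boost andbC.
case hw: (w \in ball u L) => //=.
by have [-> ->] := small_ball hu hw.
Qed.

Lemma boost_dominates_small v : small M v -> (v \in out) || [exists u in out, adj u v].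
Proof.
move=> hv; have /andP [/dominatesP hdom _] := canon_code_optimal (ball v L) id_inj.
rewrite -boost_ball // in hdom.
case/orP: (hdom v (ball_center v L)) => [| /exists_inP [u]].
  by rewrite in_setI => /andP [->].
by rewrite in_setI => /andP [hu _] ha; apply/orP; right; apply/exists_inP; exists u.
Qed.

(* On each small component the output is a minimum dominating set of it. *)
Lemma card_boost_small_le D : dominating D ->
  #|out :&: small_part G M| <= #|D :&: small_part G M|.
Proof.
move=> hD; apply: (@card_blocks_le _ (fun u => ball u L) out D) => [u | u w | u].
- rewrite in_set => hu; split; first exact: ball_center.
  by apply/subsetP => w /(small_ball hu) [_]; rewrite in_set.
- by rewrite in_set => hu /(small_ball hu) [].
rewrite in_set => hu; rewrite boost_ball //.
have /andP [_ /eqP ->] := canon_code_optimal (ball u L) id_inj.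
apply: mds_in_min; first exact: subsetIr.
rewrite dominatingE in hD; apply: dominates_setI (subsetT _) hD _ => d x.
by case/andP: hu => hc _; apply: ball_closed_adj.
Qed.

End BoostSmall.

Lemma MDS_spec (G : graph) : exists2 D : {set vert G}, dominating D & #|D| = MDS G.
Proof. by rewrite /MDS; case: ex_minnP => m /existsP [D /andP [hD /eqP <-]] _; exists D. Qed.

Lemma MDS_min (G : graph) (D : {set vert G}) : dominating D -> MDS G <= #|D|.
Proof.
move=> hD; rewrite /MDS; case: ex_minnP => m _; apply.
by apply/existsP; exists D; rewrite hD eqxx.
Qed.

Lemma MDS_eq0 (G : graph) (X : {set vert G}) : MDS G = 0 -> X = set0.
Proof.
have [D hD] := MDS_spec G; move=> <- /eqP; rewrite cards_eq0 => /eqP D0.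
apply/setP => x; rewrite in_set0; apply/negbTE/negP => _.
by case/orP: (forallP hD x); rewrite D0 ?in_set0 // => /exists_inP [u]; rewrite in_set0.
Qed.

Section InducedComponents.
Variables (G : graph) (S : {set vert G}).
Hypothesis S_closed : union_of_components S.
Local Notation GS := (induced S).

Lemma ball_induced (v y : vert GS) k : (y \in ball v k) = (val y \in ball (val v) k).
Proof.
elim: k y => [|k IH] y; first by rewrite /= !in_set1 val_eqE.
rewrite !ballS IH; congr (_ || _); apply/exists_inP/exists_inP => [[w hw ha] | [u hu ha]].
  by exists (val w); rewrite -?IH.
have huS : u \in S by apply: (subsetP (component_ball_sub S_closed (valP v) k)).
by exists (Sub u huS : vert GS); rewrite ?IH ?SubK.
Qed.

Lemma valid_ids_induced (id : vert G -> nat) : valid_ids id -> valid_ids (id \o val : vert GS -> nat).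
Proof. by case=> hinj hpos; split=> [x y /hinj /val_inj | x] //; apply: hpos. Qed.

Lemma local_induced (A : algorithm) r (id : vert G -> nat) :
  valid_ids id -> local_rounds A r -> forall v : vert GS, A G id (val v) = A GS (id \o val) v.
Proof.
move=> hid hA v; apply: hA => //; first exact: valid_ids_induced.
have inS k x : x \in ball (val v) k -> x \in S.
  by apply/subsetP/component_ball_sub => //; apply: valP.
exists (insubd v); split.
- by rewrite valKd.
- by move=> x hx; rewrite ball_induced /= insubdK // (inS _ _ hx).
- by move=> y hy; exists (val y); rewrite ?valKd -?ball_induced.
move=> x y hx hy; rewrite /known_edge /= (insubdK v (inS _ _ hx)) (insubdK v (inS _ _ hy)).
case: r hx hy => [|k] hx hy /=; first by rewrite !in_set0.
by rewrite !ball_induced /= (insubdK v (inS _ _ hx)) (insubdK v (inS _ _ hy)).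
Qed.

Lemma dominating_induced (D : {set vert G}) : dominating D ->
  dominating [set y : vert GS | val y \in D].
Proof.
move=> hD; apply/forallP => y.
case/orP: (forallP hD (val y)) => [hy | /exists_inP [u hu ha]]; first by rewrite in_set hy.
have huS : u \in S by apply: S_closed (valP y); rewrite adj_sym.
by apply/orP; right; apply/exists_inP; exists (Sub u huS : vert GS); rewrite ?in_set ?SubK.
Qed.

Lemma dominates_val (D : {set vert GS}) : dominating D -> dominates S (val @: D).
Proof.
move=> hD; apply/dominatesP => x hx.
case/orP: (forallP hD (Sub x hx : vert GS)) => [hD' | /exists_inP [u hu ha]].
  by apply/orP; left; apply/imsetP; exists (Sub x hx : vert GS); rewrite ?SubK.
by apply/orP; right; apply/exists_inP; exists (val u); rewrite ?imset_f.
Qed.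

Lemma card_induced (D : {set vert G}) : #|[set y : vert GS | val y \in D]| = #|D :&: S|.
Proof.
have -> : D :&: S = val @: [set y : vert GS | val y \in D].
  apply/setP => x; rewrite in_setI; apply/idP/imsetP => [/andP [hx hxS] | [y]].
    by exists (Sub x hxS : vert GS); rewrite ?in_set ?SubK.
  by rewrite in_set => hy ->; rewrite hy (valP y).
by rewrite card_imset //; apply: val_inj.
Qed.

Lemma MDS_induced_le (D : {set vert G}) : dominating D -> MDS GS <= #|D :&: S|.
Proof. by move=> hD; rewrite -card_induced; apply/MDS_min/dominating_induced. Qed.

End InducedComponents.

Section BoostLarge.
Variables (G : graph) (id : vert G -> nat) (A : algorithm) (r M : nat).
Hypothesis id_valid : valid_ids id.
Hypothesis A_local : local_rounds A r.
Local Notation S := (large_part G M).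
Local Notation GS := (induced S).
Local Notation out := (output (boost A M) G id).
Local Notation outA := (output A GS (id \o val)).

Lemma boost_large : out :&: S = val @: outA.
Proof.
have A_val := local_induced (@large_part_closed G M) id_valid A_local.
apply/setP => w; rewrite in_setI in_setC /output !in_set /boost; apply/idP/imsetP.
  case/andP => hw hsw; rewrite (negbTE hsw) in hw.
  have hwS : w \in S by rewrite in_setC in_set.
  by exists (Sub w hwS : vert GS); rewrite ?SubK // in_set -A_val SubK.
case=> v; rewrite in_set -A_val => hv ->.
by move: (valP v); rewrite in_setC in_set => /negbTE ->; rewrite hv.
Qed.

Lemma card_boost_large : #|out :&: S| = #|outA|.
Proof. by rewrite boost_large card_imset //; apply: val_inj. Qed.

Lemma boost_dominating : dominating outA -> dominating out.
Proof.
move=> hdA; apply/forallP => v; case hv: (small M v).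
  exact: boost_dominates_small id_valid.1 _ hv.
have hvS : v \in S by rewrite in_setC in_set hv.
have hsub : val @: outA \subset out by rewrite -boost_large subsetIl.
case/orP: (dominatesP _ _ (dominates_val hdA) v hvS) => [hv' | /exists_inP [u hu ha]].
  by rewrite (subsetP hsub _ hv').
by apply/orP; right; apply/exists_inP; exists u; rewrite ?(subsetP hsub).
Qed.

End BoostLarge.

Lemma MDS_large_gt (G : graph) M (v : vert G) : v \in large_part G M ->
  M < MDS (induced (large_part G M)).
Proof.
move=> hv; have [D hD <-] := MDS_spec (induced (large_part G M)).
rewrite -(card_imset _ val_inj); apply: large_part_dominates_gt hv.
exact: dominates_val hD.
Qed.

Local Open Scope R_scope.

Lemma additive_error_absorbed (alpha beta eps : R) (M n m d : nat) :
  1 <= alpha -> 0 <= eps -> beta <= eps * INR M.+1 -> (M < m)%nat -> (m <= d)%nat ->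
  INR n <= alpha * INR m + beta -> INR n <= (alpha + eps) * INR d.
Proof.
move=> ha he hb /leP /le_INR hMm /leP /le_INR hmd hn.
have heps : eps * INR M.+1 <= eps * INR m by apply: Rmult_le_compat_l.
have hd : (alpha + eps) * INR m <= (alpha + eps) * INR d by apply: Rmult_le_compat_l; lra.
nra.
Qed.

Lemma boost_approx (alpha beta eps : R) (C : graph -> Prop) (A : algorithm) (r M : nat) :
  1 <= alpha -> 0 <= eps -> beta <= eps * INR M.+1 ->
  closed_under_components C -> local_rounds A r ->
  (forall (G : graph) (id : vert G -> nat), C G -> valid_ids id ->
     dominating (output A G id) /\
     INR #|output A G id| <= alpha * INR (MDS G) + beta) ->
  forall (G : graph) (id : vert G -> nat), C G -> valid_ids id ->
    dominating (output (boost A M) G id) /\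
    INR #|output (boost A M) G id| <= (alpha + eps) * INR (MDS G).
Proof.
move=> ha he hb hC hA hAc G id hG hid.
set S := large_part G M.
have [hdomA hcardA] := hAc _ _ (hC G S hG (@large_part_closed G M)) (valid_ids_induced S hid).
split; first exact: boost_dominating hid hA hdomA.
have [D hD <-] := MDS_spec G.
rewrite -(cardsID (small_part G M) (output (boost A M) G id)) -(cardsID (small_part G M) D) !setDE -/(large_part G M) -/S.
rewrite (@card_boost_large G id A r M hid hA) -/S !plus_INR.
have hsmall := le_INR _ _ (leP (card_boost_small_le A M hid.1 hD)).
have hlarge : INR #|output A (induced S) (id \o val)| <= (alpha + eps) * INR #|D :&: S|.
  case: (set_0Vmem S) => [S0 | [v hv]].
    by rewrite -(@card_boost_large G id A r M hid hA) -/S S0 !setI0 cards0 /= Rmult_0_r; lra.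
  exact: additive_error_absorbed ha he hb (MDS_large_gt hv) (MDS_induced_le (@large_part_closed G M) hD) hcardA.
have hT : INR #|D :&: small_part G M| <= (alpha + eps) * INR #|D :&: small_part G M|.
  by rewrite -{1}(Rmult_1_l (INR _)); apply: Rmult_le_compat_r; [apply: pos_INR | lra].
nra.
Qed.

Definition ceil_nat (x : R) : nat := Z.to_nat (up x).

Lemma ceil_natP (x : R) : 0 <= x -> x < INR (ceil_nat x) <= x + 1.
Proof.
move=> hx; have [hup1 hup2] := archimed x.
rewrite /ceil_nat INR_IZR_INZ Z2Nat.id; first lra.
by apply: le_IZR; lra.
Qed.

Lemma boost_rounds_le (r : nat) (x : R) : 1 <= x ->
  INR (r + 3 * ceil_nat x + 2) <= INR r + 8 * x.
Proof.
move=> hx; have [_ hM] := ceil_natP (Rle_trans _ _ _ Rle_0_1 hx).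
rewrite -!plusE -multE !plus_INR; simpl INR; lra.
Qed.

Theorem mainTheorem15 :
  exists c : R, 0 <= c /\
  forall (alpha beta eps : R) (C : graph -> Prop) (A : algorithm) (r : nat),
    1 <= alpha -> 0 <= beta -> 0 < eps ->
    closed_under_components C ->
    local_rounds A r ->
    (forall (G : graph) (id : vert G -> nat), C G -> valid_ids id ->
       dominating (output A G id) /\
       INR #|output A G id| <= alpha * INR (MDS G) + beta) ->
    exists (B : algorithm) (r' : nat),
      INR r' <= INR r + c * (beta / eps) /\
      local_rounds B r' /\
      (forall (G : graph) (id : vert G -> nat), C G -> valid_ids id ->
         dominating (output B G id) /\
         INR #|output B G id| <= (alpha + eps) * INR (MDS G)).
Proof.
exists 8; split; first lra.
move=> alpha beta eps C A r ha hb he hC hA hAc.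
have hbx : beta = eps * (beta / eps) by field; lra.
have hx0 : 0 <= beta / eps by apply: Rmult_le_pos hb (Rlt_le _ _ (Rinv_0_lt_compat _ he)).
case: (Rle_lt_dec beta eps) => hbe.
  exists A, r; split; first lra.
  split=> // G id hG hid; have [hdom hcard] := hAc G id hG hid; split=> //.
  case hm: (MDS G) => [|m]; first by rewrite (MDS_eq0 (output A G id) hm) cards0 /= Rmult_0_r; lra.
  rewrite -hm in hcard *.
  apply: (@additive_error_absorbed _ _ _ 0) ha _ _ _ (leqnn _) hcard; rewrite ?hm //=; lra.
have hx : 1 <= beta / eps by apply: (Rmult_le_reg_l eps) => //; nra.
have [hM _] := ceil_natP hx0.
set M := ceil_nat (beta / eps) in hM *.
exists (boost A M), (r + 3 * M + 2)%nat; split; first exact: boost_rounds_le.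
split; first exact: boost_local.
apply: (@boost_approx alpha beta eps C A r M) => //; first lra.
by rewrite {1}hbx S_INR; apply: Rmult_le_compat_l; lra.
Qed.
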